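(* Let $n \ge 3$ and $2 \le k \le n-1$. Let $A$ be a solution of the $k$-out-of-$(n-1)$ puzzle and $B$ a solution of the $(k-1)$-out-of-$(n-1)$ puzzle, both words on the nails $\{1, \dots, n-1\}$. Then the word \[ A + n + B - A - n \] on the nails $\{1,\dots,n\}$ solves the $k$-out-of-$n$ picture-hanging puzzle.
   Context: Words are elements of the free group on the nails, written additively ($+$ group operation, $-$ inverse, $0$ identity); $n$ in the word denotes the generator for nail $n$. For a nail set $V$ and $S \subseteq V$, $w|_S$ is the image of $w$ under the homomorphism killing the generators in $S$. A solution to the $k$-out-of-$m$ picture-hanging puzzle on a set $V$ of $m$ nails is a word $w$ with $w|_S = 0 \iff |S| \ge k$ for all $S \subseteq V$ (equivalently for $k\ge1$: $w \ne 0$, removing any $k$ nails gives $0$, removing fewer leaves it nonzero). *)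

From mathcomp Require Import all_boot.
Set Implicit Arguments. Unset Strict Implicit. Unset Printing Implicit Defensive.

(* Elements of the free group on nails (nails are natural numbers), represented
   by words: a letter (a, true) is the generator a, (a, false) its inverse.
   Two words denote the same free-group element iff they have the same free
   reduction [red]. *)
Definition letter := (nat * bool)%type.
Definition word := seq letter.

Fixpoint red (w : word) : word :=
  match w with
  | [::] => [::]
  | x :: w' =>
      match red w' with
      | y :: r => if (y.1 == x.1) && (y.2 != x.2) then r else x :: y :: r
      | [::] => [:: x]
      end
  end.

Definition is_zero (w : word) : bool := red w == [::].

Definition wadd (u v : word) : word := u ++ v.
Definition wneg (u : word) : word := rev [seq (x.1, ~~ x.2) | x <- u].
Definition gen (a : nat) : word := [:: (a, true)].

(* w|_S : image under the homomorphism killing the generators in S *)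
Definition kill (S : seq nat) (w : word) : word := [seq x <- w | x.1 \notin S].

Definition on_nails (V : seq nat) (w : word) : bool := all (fun x => x.1 \in V) w.

Definition solves (k : nat) (V : seq nat) (w : word) : Prop :=
  on_nails V w /\
  forall S : seq nat, uniq S -> {subset S <= V} ->
    (is_zero (kill S w) <-> k <= size S).

Definition nails (m : nat) : seq nat := iota 1 m.

From mathcomp Require Import all_boot.
From mathcomp Require Import zify.

Set Implicit Arguments.
Unset Strict Implicit.
Unset Printing Implicit Defensive.

(* Let a = A|_S and b = B|_S.  If the new nail n is in S, the word becomes the
   conjugate a + b - a, which vanishes iff b does, i.e. iff S contains at
   least k - 1 old nails.  Otherwise it becomes a + n + b - a - n; in the free
   group this vanishes iff a and b both do, because for nonzero a the letters
   n and -n survive free reduction.  Since a = 0 forces b = 0, this happens iff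
   S contains at least k old nails. *)

Definition inv (x : letter) : letter := (x.1, ~~ x.2).

Lemma invK : involutive inv.
Proof. by case=> a b; rewrite /inv /= negbK. Qed.

Definition cancels (x y : letter) : bool := (y.1 == x.1) && (y.2 != x.2).

Lemma cancelsE x y : cancels x y = (y == inv x).
Proof.
by case: x y => a b [c d]; rewrite /cancels /inv xpair_eqE /=; case: b; case: d.
Qed.

(* Van der Waerden's trick: letters act on reduced words by [step], [red] is
   the action on the empty word, and [step (inv x)] undoes [step x]. *)
Definition step (x : letter) (r : word) : word :=
  if r is y :: r' then (if cancels x y then r' else x :: y :: r') else [:: x].

Definition reduced : pred word := sorted (fun x y => ~~ cancels x y).

Definition avoids (a : nat) (w : word) : bool := all (fun y : letter => y.1 != a) w.

Lemma red_cons x w : red (x :: w) = step x (red w).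
Proof. by rewrite /=; case: (red w). Qed.

Lemma red_cat u v : red (u ++ v) = foldr step (red v) u.
Proof. by elim: u => // x u IH; rewrite cat_cons red_cons IH. Qed.

Lemma red_foldr w : red w = foldr step [::] w.
Proof. by elim: w => // x w IH; rewrite red_cons IH. Qed.

Lemma reduced_step x r : reduced r -> reduced (step x r).
Proof.
case: r => [|y r] //= Hr; case: ifP => [_|/negbT nc]; last by rewrite /= nc.
by case: r Hr => //= z r /andP[].
Qed.

Lemma reduced_foldr u r : reduced r -> reduced (foldr step r u).
Proof. by elim: u => //= x u IH /IH; apply: reduced_step. Qed.

Lemma reduced_red w : reduced (red w).
Proof. by rewrite red_foldr; apply: reduced_foldr. Qed.

Lemma red_subseq w : subseq (red w) w.
Proof.
elim: w => // x w IH; rewrite red_cons.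
case: (red w) IH => [|y r] /= sub; first by rewrite eqxx sub0seq.
case: ifP => _; last by rewrite eqxx.
apply: subseq_trans (subseq_cons _ x); apply: subseq_trans sub.
exact: subseq_cons.
Qed.

Lemma step_invK x r : reduced r -> step (inv x) (step x r) = r.
Proof.
case: r => [|y r] /=; first by rewrite cancelsE invK eqxx.
case: ifP => [|_ _] /=; last by rewrite cancelsE invK eqxx.
rewrite cancelsE => /eqP ->; case: r => //= z r /andP[].
by rewrite !cancelsE invK => /negbTE ->.
Qed.

Lemma step_foldr x u r :
  reduced r -> step x (foldr step r u) = foldr step r (step x u).
Proof.
move=> Hr; case: u => [|y u] //=; case: ifP => // /[!cancelsE] /eqP ->.
by rewrite -{1}(invK x) step_invK //; apply: reduced_foldr.
Qed.

Lemma foldr_step_red u r : reduced r -> foldr step r u = foldr step r (red u).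
Proof. by move=> Hr; elim: u => // x u IH; rewrite red_cons -step_foldr -?IH. Qed.

Lemma red_catl u v : red (u ++ v) = red (red u ++ v).
Proof. by rewrite !red_cat -foldr_step_red //; apply: reduced_red. Qed.

Lemma wnegK : involutive wneg.
Proof.
move=> u; rewrite /wneg map_rev revK -map_comp.
by rewrite (eq_map (g := id) invK) map_id.
Qed.

Lemma wneg_cons x u : wneg (x :: u) = wneg u ++ [:: inv x].
Proof. by rewrite /wneg /= rev_cons -cats1. Qed.

Lemma red_cat_wneg u v : red (u ++ wneg u ++ v) = red v.
Proof.
rewrite !red_cat; move: (red v) (reduced_red v); elim: u => //= x u IH r Hr.
rewrite wneg_cons foldr_cat /= IH; first by rewrite -{1}(invK x) step_invK.
exact: reduced_step.
Qed.

Lemma is_zero_cat_wneg u : is_zero (u ++ wneg u).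
Proof. by rewrite /is_zero -[_ ++ wneg u]cats0 -catA red_cat_wneg. Qed.

Lemma red_cat_zero u z v : is_zero z -> red (u ++ z ++ v) = red (u ++ v).
Proof. by move=> /eqP z0; rewrite red_cat red_catl z0 cat0s -red_cat. Qed.

Lemma is_zero_wneg u : is_zero (wneg u) = is_zero u.
Proof.
suff zero_wneg v : is_zero v -> is_zero (wneg v).
  by apply/idP/idP => /zero_wneg //; rewrite wnegK.
move=> v0; rewrite /is_zero -[wneg v]cat0s -(red_cat_zero [::] _ v0).
exact: is_zero_cat_wneg.
Qed.

Lemma is_zero_conj a b : is_zero (a ++ b ++ wneg a) = is_zero b.
Proof.
apply/idP/idP => [conj0|b0]; last first.
  by rewrite /is_zero red_cat_zero //; apply: is_zero_cat_wneg.
have aa0 : is_zero (wneg a ++ a) by rewrite -{2}(wnegK a) is_zero_cat_wneg.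
rewrite /is_zero -[b]cats0 -(red_cat_zero _ _ aa0) -(red_cat_wneg (wneg a)) wnegK.
have -> : wneg a ++ a ++ b ++ (wneg a ++ a) ++ [::] = wneg a ++ (a ++ b ++ wneg a) ++ a.
  by rewrite cats0 !catA.
by rewrite red_cat_zero.
Qed.

Lemma avoids_cat a u v : avoids a (u ++ v) = avoids a u && avoids a v.
Proof. exact: all_cat. Qed.

Lemma avoids_wneg a u : avoids a (wneg u) = avoids a u.
Proof. by rewrite /avoids /wneg all_rev all_map. Qed.

Lemma avoids_red a w : avoids a w -> avoids a (red w).
Proof. by move=> /allP aw; apply/allP => y /(mem_subseq (red_subseq w)) /aw. Qed.

Lemma foldr_step_avoids u x t :
  avoids x.1 u -> foldr step (x :: t) u = red u ++ x :: t.
Proof.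
elim: u => // y u IH /andP[yx /IH /= ->].
by case: (red u) => [|z r] /=; rewrite /cancels; [rewrite eq_sym (negbTE yx) | case: ifP].
Qed.

Lemma commutator_nonzero a b x : avoids x.1 a -> avoids x.1 b -> ~~ is_zero a ->
  ~~ is_zero (a ++ x :: b ++ wneg a ++ [:: inv x]).
Proof.
move=> xa xb a_nz.
have xc : avoids x.1 (b ++ wneg a) by rewrite avoids_cat avoids_wneg xb.
rewrite /is_zero catA red_cat red_cons red_cat /= (foldr_step_avoids (x := inv x) _ xc).
move: (avoids_red xc); case: (red (b ++ wneg a)) => [|z c] /= => [_|/andP[zx _]].
  by rewrite cancelsE eqxx -red_foldr.
by rewrite /cancels (negbTE zx) /= (foldr_step_avoids _ xa); case: (red a).
Qed.

Lemma is_zero_commutator a b x : avoids x.1 a -> avoids x.1 b ->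
  is_zero (a ++ x :: b ++ wneg a ++ [:: inv x]) = is_zero a && is_zero b.
Proof.
move=> xa xb; have [a0|a_nz] /= := boolP (is_zero a); last first.
  exact/negbTE/commutator_nonzero.
have wa0 : is_zero (wneg a) by rewrite is_zero_wneg.
rewrite -(is_zero_conj [:: x] b) /is_zero -[a ++ _]cat0s red_cat_zero //.
have -> : [::] ++ x :: b ++ wneg a ++ [:: inv x] = ([:: x] ++ b) ++ wneg a ++ [:: inv x].
  by [].
by rewrite (red_cat_zero ([:: x] ++ b) (z := wneg a)) // -catA.
Qed.

Lemma kill_cat S u v : kill S (u ++ v) = kill S u ++ kill S v.
Proof. exact: filter_cat. Qed.

Lemma kill_wneg S u : kill S (wneg u) = wneg (kill S u).
Proof. by rewrite /kill /wneg filter_rev filter_map. Qed.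

Lemma avoids_kill a S w : avoids a w -> avoids a (kill S w).
Proof.
by move=> aw; rewrite /avoids all_filter; apply: sub_all aw => y /= ->; rewrite implybT.
Qed.

Lemma is_zero_kill_commutator S a b x : avoids x.1 a -> avoids x.1 b ->
  is_zero (kill S (a ++ x :: b ++ wneg a ++ [:: inv x])) =
  if x.1 \in S then is_zero (kill S b)
  else is_zero (kill S a) && is_zero (kill S b).
Proof.
move=> xa xb; rewrite !kill_cat /= !kill_cat kill_wneg /=; case: (x.1 \in S) => /=.
  by rewrite cats0 is_zero_conj.
by rewrite is_zero_commutator //; apply: avoids_kill.
Qed.

Lemma kill_on_nails V S w : on_nails V w -> kill S w = kill [seq s <- S | s \in V] w.
Proof.
by move=> /allP Vw; apply: eq_in_filter => y /Vw yV; rewrite mem_filter yV.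
Qed.

Lemma size_filter_mem_cons (T : eqType) (V S : seq T) (x : T) :
  uniq S -> x \notin V -> {subset S <= x :: V} ->
  size S = size [seq s <- S | s \in V] + (x \in S).
Proof.
move=> uS xV SxV; rewrite size_filter -(count_predC (mem V)) -count_uniq_mem //.
congr (_ + _); apply: eq_in_count => s /SxV; rewrite inE /=.
by case: eqP => [->|_ /= ->]; rewrite ?(negbTE xV).
Qed.

Lemma solves_is_zero k V w S : solves k V w -> uniq S -> {subset S <= V} ->
  is_zero (kill S w) = (k <= size S).
Proof. by move=> [_ Hw] uS SV; apply/idP/idP => /(Hw S uS SV). Qed.

Lemma mem_nails m a : (a \in nails m) = (0 < a <= m).
Proof. by rewrite mem_iota; lia. Qed.

Lemma on_nails_cat V u v : on_nails V (u ++ v) = on_nails V u && on_nails V v.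
Proof. exact: all_cat. Qed.

Lemma on_nails_wneg V u : on_nails V (wneg u) = on_nails V u.
Proof. by rewrite /on_nails /wneg all_rev all_map. Qed.

Theorem proposition4 (n k : nat) (A B : word) :
  3 <= n -> 2 <= k -> k <= n - 1 ->
  solves k (nails (n - 1)) A ->
  solves (k - 1) (nails (n - 1)) B ->
  solves k (nails n)
    (wadd A (wadd (gen n) (wadd B (wadd (wneg A) (wneg (gen n)))))).
Proof.
move=> n3 k2 _ solA solB; have [onA _] := solA; have [onB _] := solB.
have -> : wadd A (wadd (gen n) (wadd B (wadd (wneg A) (wneg (gen n))))) =
          A ++ [:: (n, true)] ++ B ++ wneg A ++ [:: inv (n, true)] by [].
have sub_nails w : on_nails (nails (n - 1)) w -> on_nails (nails n) w.
  by apply: sub_all => y /=; rewrite !mem_nails; lia.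
have avoids_n w : on_nails (nails (n - 1)) w -> avoids n w.
  by apply: sub_all => y /=; rewrite mem_nails; lia.
split.
  rewrite !on_nails_cat on_nails_wneg (sub_nails A onA) (sub_nails B onB) /= mem_nails.
  lia.
move=> S uS Sn; set S' := [seq s <- S | s \in nails (n - 1)].
have uS' : uniq S' by apply: filter_uniq.
have S'V : {subset S' <= nails (n - 1)} by move=> s; rewrite mem_filter => /andP[].
have sizeS : size S = size S' + (n \in S).
  by apply: size_filter_mem_cons => // [|s /Sn]; rewrite ?inE !mem_nails; lia.
rewrite (is_zero_kill_commutator S (x := (n, true))) ?avoids_n //=.
rewrite !(kill_on_nails S onA) (kill_on_nails S onB).
rewrite (solves_is_zero solA) // !(solves_is_zero solB) //.
by rewrite -/S' sizeS; case: (n \in S) => /=; lia.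
Qed.
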